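(* Let $n_1,\dots,n_r,k$ be integers with $\min\{n_1,\dots,n_r\}>2k>0$, and let $g\in S_{n_1}\times\dots\times S_{n_r}$ be such that for every $1\le i\le r$, all cycles of the projection of $g$ to $S_{n_i}$ have length exceeding $k$. Then the subgroups $S_{n_1-k}\times\dots\times S_{n_r-k}$ and $\langle g\rangle$ invariably generate $S_{n_1}\times\dots\times S_{n_r}$.
   Context: $S_{n_1}\times\dots\times S_{n_r}$ is the group of permutations of $\{1,\dots,n_1+\dots+n_r\}$ preserving each block $B_i=\{n_1+\dots+n_{i-1}+1,\dots,n_1+\dots+n_i\}$, with $S_{n_i}$ the permutations of $B_i$; $S_{n_i-k}\le S_{n_i}$ is the subgroup of permutations of the first $n_i-k$ elements of $B_i$ fixing its last $k$ elements. Subgroups $\{H_i\}_{i\in I}$ of a group $H$ invariably generate $H$ if for every choice of $\{\sigma_i\}_{i\in I}\subseteq H$ the conjugates $\{\sigma_i^{-1}H_i\sigma_i\}$ generate $H$. *)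

From mathcomp Require Import all_boot all_fingroup.
Set Implicit Arguments. Unset Strict Implicit. Unset Printing Implicit Defensive.
Local Open Scope group_scope.

(* Blocks: for n = [:: n_1; ...; n_r], points are 'I_(sumn n) (0-based),
   block i (0-based) = { sumn (take i n) <= x < sumn (take i.+1 n) }. *)
Definition block (n : seq nat) (i : nat) : {set 'I_(sumn n)} :=
  [set x : 'I_(sumn n) | (sumn (take i n) <= x) && (x < sumn (take i.+1 n))].

(* S_{n_1} x ... x S_{n_r}: permutations preserving every block. *)
Definition prod_sym (n : seq nat) : {set {perm 'I_(sumn n)}} :=
  [set s : {perm 'I_(sumn n)} |
     [forall i : 'I_(size n), s @: block n i == block n i]].

Definition block_top (n : seq nat) (k i : nat) : {set 'I_(sumn n)} :=
  [set x in block n i | sumn (take i.+1 n) - k <= x].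

(* S_{n_1-k} x ... x S_{n_r-k}: elements of the product fixing the last
   k elements of every block. *)
Definition prod_sym_sub (n : seq nat) (k : nat) : {set {perm 'I_(sumn n)}} :=
  [set s in prod_sym n |
     [forall i : 'I_(size n), forall x in block_top n k i, s x == x]].

Definition invariably_generate (gT : finGroupType) (I : finType)
    (G : {set gT}) (H : I -> {set gT}) : Prop :=
  forall sigma : I -> gT, (forall i, sigma i \in G) ->
    << \bigcup_(i : I) (H i :^ sigma i) >> = G.

From mathcomp Require Import all_boot all_fingroup zify.
Set Implicit Arguments. Unset Strict Implicit. Unset Printing Implicit Defensive.
Local Open Scope group_scope.

(* The conjugate of S_{n_1-k} x ... x S_{n_r-k} contains every transposition of
   a set A_i of n_i - k > n_i / 2 points of the block B_i.  Fix a in A_i and let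
   C be the set of points z such that the transposition (a z) lies in the group
   G generated by both conjugates; then A_i is contained in C.  C and its image
   under the conjugate h of g both take up more than half of B_i, so they meet,
   which forces h to map C into itself.  Hence C is a union of h-cycles, and
   since every cycle is longer than k >= |B_i \ C|, C = B_i.  So G contains all
   transpositions within blocks, and these generate the product. *)

Lemma porbitJ (T : finType) (s t : {perm T}) x :
  porbit (s ^ t) (t x) = t @: porbit s x.
Proof.
apply/setP => y; apply/porbitP/imsetP => [[m ->]|[_ /porbitP[m ->] ->]].
  by exists ((s ^+ m) x); rewrite ?mem_porbit // -conjXg permJ.
by exists m; rewrite -conjXg permJ.
Qed.

Lemma card_porbitJ (T : finType) (s t : {perm T}) x :
  #|porbit (s ^ t) (t x)| = #|porbit s x|.
Proof. by rewrite porbitJ card_imset //; exact: perm_inj. Qed.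

Section TranspositionClosure.
Variables (T : finType) (G : {group {perm T}}).

Lemma tperm_trans a b c : tperm a b \in G -> tperm b c \in G -> tperm a c \in G.
Proof.
move=> abG bcG; have [-> //|ab] := eqVneq a b; have [<- //|bc] := eqVneq b c.
have [<-|ac] := eqVneq a c; first by rewrite tperm1 group1.
have -> : tperm a c = tperm b c ^ tperm a b.
  by rewrite tpermJ tpermR tpermD // eq_sym.
exact: groupJ.
Qed.

Definition tperm_class a := [set z | tperm a z \in G].

Lemma tperm_classP a y z :
  y \in tperm_class a -> z \in tperm_class a -> tperm y z \in G.
Proof. by rewrite !inE tpermC; exact: tperm_trans. Qed.

Lemma tperm_class_stable a g z : g \in G ->
  z \in tperm_class a -> g z \in tperm_class a ->
  {in tperm_class a, forall y, g y \in tperm_class a}.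
Proof.
rewrite !inE => gG azG agzG y; rewrite !inE => ayG.
have agaG : tperm a (g a) \in G.
  by apply: (tperm_trans agzG); rewrite -tpermJ groupJ // tpermC.
by apply: (tperm_trans agaG); rewrite -tpermJ groupJ.
Qed.

Lemma porbit_tperm_class a g z : g \in G ->
  z \in tperm_class a -> g z \in tperm_class a ->
  {in tperm_class a, forall y, porbit g y \subset tperm_class a}.
Proof.
move=> gG zC gzC y yC; apply/subsetP => _ /porbitP[m ->].
elim: m => [|m IHm]; first by rewrite perm1.
by rewrite expgSr permM (tperm_class_stable gG zC gzC).
Qed.

Lemma tperms_from_large_subset (B A : {set T}) g :
  {in G, forall (s : {perm T}) x, (s x \in B) = (x \in B)} ->
  A \subset B -> #|B| < 2 * #|A| ->
  {in A &, forall x y, tperm x y \in G} -> g \in G ->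
  {in B, forall x, #|B| - #|A| < #|porbit g x|} ->
  {in B &, forall x y, tperm x y \in G}.
Proof.
move=> nBG sAB ltBA tA gG long_orbits.
have [a aA] : exists a, a \in A by apply/set0Pn; rewrite -card_gt0; lia.
pose C := tperm_class a.
have sAC : A \subset C by apply/subsetP => z zA; rewrite inE tA.
have sCB : C \subset B.
  apply/subsetP => z; rewrite inE => /nBG/(_ a).
  by rewrite tpermL (subsetP sAB a aA) => ->.
have [z zC gzC] : exists2 z, z \in C & g z \in C.
  (* C and g @: C are two subsets of B, each of size more than #|B| / 2. *)
  have sCgCB : C :|: g @: C \subset B.
    rewrite subUset sCB; apply/subsetP => _ /imsetP[z zC ->].
    by rewrite nBG // (subsetP sCB).
  have /set0Pn[w /setIP[wC /imsetP[z zC wE]]] : C :&: g @: C != set0.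
    rewrite -card_gt0; have := cardsUI C (g @: C).
    rewrite card_imset; last exact: perm_inj.
    have := subset_leq_card sCgCB; have := subset_leq_card sAC; lia.
  by exists z; rewrite -?wE.
have sBC : B \subset C.
  apply/subsetP => x xB; apply/idPn => xC.
  have : porbit g x \subset B :\: C.
    apply/subsetP => y xy; rewrite inE; apply/andP; split.
      apply: contra xC => yC; apply: (subsetP (porbit_tperm_class gG zC gzC yC)).
      by rewrite porbit_sym.
    by case/porbitP: xy => m ->; rewrite nBG ?groupX.
  move/subset_leq_card; rewrite cardsD (setIidPr sCB).
  have := long_orbits x xB; have := subset_leq_card sAC; lia.
move=> x y xB yB; apply: tperm_classP; exact: (subsetP sBC).
Qed.

End TranspositionClosure.

Lemma tperm_subG (T : finType) (G H : {group {perm T}}) :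
  {in H, forall (s : {perm T}) x, tperm x (s x) \in H :&: G} -> H \subset G.
Proof.
move=> tHG; apply/subsetP => s.
have [m] := ubnP #|[set x | s x != x]|; elim: m s => // m IHm s /ltnSE supp_s sH.
have [x /= sx_x|s_id] := pickP (fun x => s x != x); last first.
  suff -> : s = 1 by exact: group1.
  by apply/permP => x; apply/eqP; rewrite perm1; move/negbFE: (s_id x).
have /setIP[tH tG] := tHG s sH x.
rewrite -(mulgK (tperm x (s x)) s) tpermV groupM // IHm ?groupM //.
apply: leq_trans supp_s; apply: proper_card; apply/properP; split.
  apply/subsetP => y; rewrite !inE permM; apply: contra_neq => sy_y.
  rewrite sy_y tpermD //; first by apply: contra_neq sx_x => ->.
  by apply: contra_neq sx_x => sxy; apply: (@perm_inj _ s); rewrite sxy.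
by exists x; rewrite !inE ?sx_x // permM tpermR eqxx.
Qed.

Lemma gen_conjg_subG (gT : finGroupType) (I : finType) (G : {group gT})
    (H : I -> {set gT}) (sigma : I -> gT) :
  (forall i, H i \subset G) -> (forall i, sigma i \in G) ->
  << \bigcup_i H i :^ sigma i >> \subset G.
Proof.
move=> sHG sigmaG; rewrite gen_subG; apply/bigcupsP => i _.
by rewrite -(conjGid (sigmaG i)) conjSg.
Qed.

Lemma card_ord_itv N a b : b <= N -> #|[set x : 'I_N | a <= x < b]| = b - a.
Proof.
elim: b => [|b IHb] ltbN.
  by apply/eqP; rewrite sub0n cards_eq0; apply/eqP/setP => x; rewrite !inE andbF.
have [leab|ltba] := leqP a b; last first.
  rewrite (_ : b.+1 - a = 0); last lia.
  by apply/eqP; rewrite cards_eq0; apply/eqP/setP => x; rewrite !inE; lia.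
have -> : [set x : 'I_N | a <= x < b.+1] = Ordinal ltbN |: [set x : 'I_N | a <= x < b].
  by apply/setP => x; rewrite !inE -val_eqE /=; lia.
by rewrite cardsU1 IHb 1?ltnW // !inE ltnn andbF; lia.
Qed.

Section Blocks.
Variable n : seq nat.

Lemma leq_sumn_take i j : i <= j -> sumn (take i n) <= sumn (take j n).
Proof. by move=> le_ij; rewrite -(subnKC le_ij) takeD sumn_cat leq_addr. Qed.

Lemma sumn_take_leq i : sumn (take i n) <= sumn n.
Proof. by rewrite -{2}(cat_take_drop i n) sumn_cat leq_addr. Qed.

Lemma sumn_takeS i : i < size n ->
  sumn (take i.+1 n) = sumn (take i n) + nth 0 n i.
Proof. by move=> lt_i_n; rewrite (take_nth 0 lt_i_n) sumn_rcons. Qed.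

Lemma block_index_uniq i j x : x \in block n i -> x \in block n j -> i = j.
Proof.
rewrite !inE; wlog lt_ij : i j / i < j => [hyp|].
  by case: (ltngtP i j) => [/hyp|/hyp h ? ?|//]; [|apply/esym/h].
by have := leq_sumn_take lt_ij; lia.
Qed.

Lemma block_index_exists x : exists i : 'I_(size n), x \in block n i.
Proof.
have x_lt_n : exists i, x < sumn (take i n).
  by exists (size n); rewrite take_size.
case: (ex_minnP x_lt_n) => [[|i]]; first by rewrite take0.
move=> x_lt_i i_min; have lt_i_n : i < size n.
  by have := i_min (size n); rewrite take_size => /(_ (ltn_ord x)).
exists (Ordinal lt_i_n); rewrite inE x_lt_i andbT leqNgt.
by apply/negP => /i_min; rewrite ltnn.
Qed.

Lemma card_block (i : 'I_(size n)) : #|block n i| = nth 0 n i.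
Proof. by rewrite card_ord_itv ?sumn_take_leq // sumn_takeS //; lia. Qed.

Lemma card_block_top k i : #|block_top n k i| <= k.
Proof.
pose e := sumn (take i.+1 n).
have sub_itv : block_top n k i \subset [set x : 'I_(sumn n) | e - k <= x < e].
  by apply/subsetP => x; rewrite !inE => /andP[/andP[_ ->] ->].
apply: leq_trans (subset_leq_card sub_itv) _.
by rewrite card_ord_itv ?sumn_take_leq; lia.
Qed.

Lemma prod_symP (s : {perm 'I_(sumn n)}) : reflect
  (forall (i : 'I_(size n)) x, (s x \in block n i) = (x \in block n i))
  (s \in prod_sym n).
Proof.
rewrite inE; apply: (iffP forallP) => [s_block i x | s_block i].
  by rewrite -{1}(eqP (s_block i)) mem_imset //; exact: perm_inj.
apply/eqP/setP => x; rewrite -{1}(permKV s x) mem_imset; last exact: perm_inj.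
by rewrite -s_block permKV.
Qed.

Lemma prod_sym_group_set : group_set (prod_sym n).
Proof.
apply/group_setP; split; first by apply/prod_symP => i x; rewrite perm1.
move=> s t /prod_symP s_block /prod_symP t_block.
by apply/prod_symP => i x; rewrite permM t_block s_block.
Qed.

Canonical prod_sym_group := group prod_sym_group_set.

Lemma mem_block_eq i j a b : a \in block n i -> b \in block n i ->
  (a \in block n j) = (b \in block n j).
Proof.
move=> ai bi; apply/idP/idP => [aj|bj].
  by rewrite -(block_index_uniq ai aj).
by rewrite -(block_index_uniq bi bj).
Qed.

Lemma tperm_prod_sym i a b :
  a \in block n i -> b \in block n i -> tperm a b \in prod_sym n.
Proof.
move=> ai bi; apply/prod_symP => j x.
by case: tpermP => [->|->|//]; rewrite (mem_block_eq j ai bi).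
Qed.

Lemma tperm_prod_sym_sub k i a b :
  a \in block n i :\: block_top n k i -> b \in block n i :\: block_top n k i ->
  tperm a b \in prod_sym_sub n k.
Proof.
have low c j : c \in block n i :\: block_top n k i -> c \notin block_top n k j.
  case/setDP=> ci; apply: contra => /[dup] + /setIdP[cj _].
  by rewrite (block_index_uniq ci cj).
move=> a_low b_low; have /setDP[ai _] := a_low; have /setDP[bi _] := b_low.
rewrite inE (tperm_prod_sym ai bi); apply/forallP => j; apply/forall_inP => x xj.
apply/eqP/tpermD.
  by apply: contraNneq (low a j a_low) => ->.
by apply: contraNneq (low b j b_low) => ->.
Qed.

End Blocks.

Lemma block_tperms n k (i : 'I_(size n)) (G : {group {perm 'I_(sumn n)}}) s h :
  2 * k < nth 0 n i -> G \subset prod_sym n -> s \in prod_sym n ->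
  prod_sym_sub n k :^ s \subset G -> h \in G ->
  {in block n i, forall x, k < #|porbit h x|} ->
  {in block n i &, forall x y, tperm x y \in G}.
Proof.
move=> lt_2k_n sGP sP sPsubG hG long_orbits.
set B := block n i; set A := s @: (B :\: block_top n k i).
have cardA : #|A| = #|B| - #|block_top n k i|.
  rewrite card_imset; last exact: perm_inj.
  by rewrite cardsD (setIidPr _) //; apply/subsetP => x /setIdP[].
have nBG : {in G, forall (t : {perm _}) x, (t x \in B) = (x \in B)}.
  by move=> t /(subsetP sGP)/prod_symP; apply.
have top_k := card_block_top n k i; have := card_block i; rewrite -/B => cardB.
apply: (tperms_from_large_subset (A := A) nBG _ _ _ hG).
- apply/subsetP => _ /imsetP[x /setDP[xB _] ->].
  by rewrite (prod_symP _ sP).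
- lia.
- move=> _ _ /imsetP[x x_low ->] /imsetP[y y_low ->].
  by rewrite -tpermJ (subsetP sPsubG) // memJ_conjg (tperm_prod_sym_sub x_low y_low).
- by move=> x xB; apply: leq_trans (long_orbits x xB); lia.
Qed.

Theorem corollary3p9 (n : seq nat) (k : nat) (g : {perm 'I_(sumn n)}) :
  0 < 2 * k ->
  (forall i : 'I_(size n), 2 * k < nth 0 n i) ->
  g \in prod_sym n ->
  (forall i : 'I_(size n), forall x, x \in block n i -> k < #|porbit g x|) ->
  invariably_generate (prod_sym n)
    (fun b : bool => if b then prod_sym_sub n k else <[g]>).
Proof.
move=> _ lt_2k_n gP long_orbits sigma sigmaP.
set G := << _ >>.
have sGP : G \subset prod_sym n.
  apply: gen_conjg_subG => // [[]]; last by rewrite cycle_subG.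
  by apply/subsetP => s /setIdP[].
have sPsubG : prod_sym_sub n k :^ sigma true \subset G.
  exact: sub_gen (bigcup_sup true _).
have gG : g ^ sigma false \in G.
  by apply/mem_gen/bigcupP; exists false; rewrite // memJ_conjg cycle_id.
have long_orbitsJ (i : 'I_(size n)) :
    {in block n i, forall x, k < #|porbit (g ^ sigma false) x|}.
  move=> x xi; rewrite -(permKV (sigma false) x) card_porbitJ (long_orbits i) //.
  by rewrite (prod_symP _ (groupVr (sigmaP false))).
apply/eqP; rewrite eqEsubset sGP; apply: tperm_subG => s sP x.
have [i xi] := block_index_exists x.
have sxi : s x \in block n i by rewrite (prod_symP _ sP).
have tpermsG := block_tperms (lt_2k_n i) sGP (sigmaP true) sPsubG gG (long_orbitsJ i).
by rewrite inE (tperm_prod_sym xi sxi) tpermsG.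
Qed.
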